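(* Let $X,Y$ be compact metric spaces, $f:X\dashrightarrow Y$ a continuous open-dense defined map, and $U\subset X$ an open dense set such that $f(U)$ is open dense in $Y$ and $f|_U:U\to f(U)$ is a proper covering map of finite degree $\deg(f)$. Then $f^*(SM^+(Y))\subset SM^+(X)$, and for every $\nu\in SM^+(Y)$ we have $f^*(\nu)(\pm1)=\deg(f)\,\nu(\pm1)$; in particular $\|f^*(\nu)\|=\deg(f)\|\nu\|$.
   Context: Strong submeasures: sub-linear bounded maps $C^0(X)\to\mathbb{R}$, with norm $\|\mu\|$ the least $C$ with $|\mu(\varphi)|\le C\|\varphi\|_{L^\infty}$; positive means non-decreasing; $SM^+$ denotes positive strong submeasures. A continuous open-dense defined map $f:X\dashrightarrow Y$ is a continuous map defined on an open dense subset of $X$. For open dense $V\subset Y$ and bounded $g:V\to\mathbb{R}$, $E(g)=g$ on $V$ and $E(g)(y)=\limsup_{z\in V,z\to y}g(z)$ for $y\notin V$. For $\varphi\in C^0(X)$, $(f|_U)_*(\varphi)(y)=\sum_{x\in U,f(x)=y}\varphi(x)$ (continuous on $f(U)$) and $f_*(\varphi):=E((f|_U)_*(\varphi))$, a bounded upper-semicontinuous function on $Y$. For $\nu\in SM^+(Y)$ and $\varphi\in C^0(X)$, $f^*(\nu)(\varphi):=\inf\{\nu(\psi):\psi\in C^0(Y),\ \psi\ge f_*(\varphi)\}$. *)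

From Stdlib Require Import Reals Lra List Classical ClassicalEpsilon.
Open Scope R_scope.

Definition is_metric {X : Type} (d : X -> X -> R) : Prop :=
  (forall x y, 0 <= d x y) /\ (forall x y, d x y = 0 <-> x = y) /\
  (forall x y, d x y = d y x) /\ (forall x y z, d x z <= d x y + d y z).

Definition mopen {X : Type} (d : X -> X -> R) (A : X -> Prop) : Prop :=
  forall x, A x -> exists r, r > 0 /\ forall y, d x y < r -> A y.

Definition dense_set {X : Type} (d : X -> X -> R) (A : X -> Prop) : Prop :=
  forall x r, r > 0 -> exists y, A y /\ d x y < r.

Definition compact_set {X : Type} (d : X -> X -> R) (K : X -> Prop) : Prop :=
  forall (I : Type) (O : I -> X -> Prop),
    (forall i, mopen d (O i)) -> (forall x, K x -> exists i, O i x) ->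
    exists l : list I, forall x, K x -> exists i, In i l /\ O i x.

Definition compact_space {X : Type} (d : X -> X -> R) : Prop :=
  compact_set d (fun _ => True).

Definition distR (a b : R) : R := Rabs (b - a).

Definition continuous_on {X Y : Type} (dX : X -> X -> R) (dY : Y -> Y -> R)
  (A : X -> Prop) (f : X -> Y) : Prop :=
  forall x, A x -> forall e, e > 0 -> exists del, del > 0 /\
    forall x', A x' -> dX x x' < del -> dY (f x) (f x') < e.

Definition cont {X : Type} (dX : X -> X -> R) (phi : X -> R) : Prop :=
  continuous_on dX distR (fun _ => True) phi.

Definition Rsup (P : R -> Prop) : R := epsilon (inhabits 0) (is_lub P).
Definition Rinf (P : R -> Prop) : R := - Rsup (fun r => P (- r)).

(* sup norm ||phi||_{L^infty} (0 on the empty space) *)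
Definition Linf {X : Type} (phi : X -> R) : R :=
  Rsup (fun r => r = 0 \/ exists x, r = Rabs (phi x)).

Definition strong_submeasure {X : Type} (dX : X -> X -> R) (mu : (X -> R) -> R) : Prop :=
  (forall phi psi, cont dX phi -> cont dX psi ->
      mu (fun x => phi x + psi x) <= mu phi + mu psi) /\
  (forall t phi, 0 <= t -> cont dX phi -> mu (fun x => t * phi x) = t * mu phi) /\
  (exists C, forall phi, cont dX phi -> Rabs (mu phi) <= C * Linf phi).

Definition positive_sm {X : Type} (dX : X -> X -> R) (mu : (X -> R) -> R) : Prop :=
  forall phi psi, cont dX phi -> cont dX psi -> (forall x, phi x <= psi x) -> mu phi <= mu psi.

Definition SMplus {X : Type} (dX : X -> X -> R) (mu : (X -> R) -> R) : Prop :=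
  strong_submeasure dX mu /\ positive_sm dX mu.

Definition smnorm {X : Type} (dX : X -> X -> R) (mu : (X -> R) -> R) : R :=
  Rinf (fun C => 0 <= C /\ forall phi, cont dX phi -> Rabs (mu phi) <= C * Linf phi).

Definition image {X Y : Type} (U : X -> Prop) (f : X -> Y) : Y -> Prop :=
  fun y => exists x, U x /\ f x = y.

Definition proper_covering {X Y : Type} (dX : X -> X -> R) (dY : Y -> Y -> R)
  (U : X -> Prop) (f : X -> Y) (d : nat) : Prop :=
  continuous_on dX dY U f /\
  (forall K : Y -> Prop, (forall y, K y -> image U f y) -> compact_set dY K ->
      compact_set dX (fun x => U x /\ K (f x))) /\
  (forall y, image U f y ->
     exists W : Y -> Prop, mopen dY W /\ W y /\ (forall w, W w -> image U f w) /\
     exists S : nat -> X -> Prop,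
       (forall i, (i < d)%nat ->
          mopen dX (S i) /\ (forall x, S i x -> U x /\ W (f x)) /\
          exists g : Y -> X, continuous_on dY dX W g /\
            (forall w, W w -> S i (g w) /\ f (g w) = w) /\
            (forall x, S i x -> g (f x) = x)) /\
       (forall i j x, (i < d)%nat -> (j < d)%nat -> S i x -> S j x -> i = j) /\
       (forall x, U x -> W (f x) -> exists i, (i < d)%nat /\ S i x)).

Definition fiber_list {X Y : Type} (U : X -> Prop) (f : X -> Y) (y : Y) : list X :=
  epsilon (inhabits nil) (fun l => NoDup l /\ forall x, In x l <-> (U x /\ f x = y)).

Definition pushU {X Y : Type} (U : X -> Prop) (f : X -> Y) (phi : X -> R) (y : Y) : R :=
  fold_right Rplus 0 (map phi (fiber_list U f y)).

Definition limsup_at {Y : Type} (dY : Y -> Y -> R) (V : Y -> Prop) (g : Y -> R) (y : Y) : R :=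
  Rinf (fun s => exists r, r > 0 /\
          s = Rsup (fun t => exists z, V z /\ dY z y < r /\ t = g z)).

Definition Ext {Y : Type} (dY : Y -> Y -> R) (V : Y -> Prop) (g : Y -> R) (y : Y) : R :=
  match excluded_middle_informative (V y) with
  | left _ => g y
  | right _ => limsup_at dY V g y
  end.

Definition push {X Y : Type} (dY : Y -> Y -> R) (U : X -> Prop) (f : X -> Y)
  (phi : X -> R) : Y -> R :=
  Ext dY (image U f) (pushU U f phi).

Definition pull {X Y : Type} (dY : Y -> Y -> R) (U : X -> Prop) (f : X -> Y)
  (nu : (Y -> R) -> R) (phi : X -> R) : R :=
  Rinf (fun s => exists psi, cont dY psi /\ (forall y, push dY U f phi y <= psi y) /\ s = nu psi).

From Stdlib Require Import Reals Lra Lia List Permutation ClassicalEpsilon.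
Open Scope R_scope.

(* On the open dense set V = f(U) the push-forward (f|_U)_* phi is a sum over the deg points
   of a fibre, so it is bounded by deg ||phi|| and equals deg c on the constant c.  A continuous
   psi dominates the upper-semicontinuous extension f_* phi as soon as it dominates
   (f|_U)_* phi on V, because the limsup defining f_* phi outside V is controlled by the
   continuity of psi.  Hence f^* nu (phi) is the infimum of nu(psi) over continuous psi
   dominating (f|_U)_* phi on V, and sub-additivity, homogeneity and monotonicity pass from
   (f|_U)_* and nu to f^* nu.  Since continuous functions comparing on a dense set compare
   everywhere, f^* nu (c) = nu (deg c).  Finally the norm of a positive strong submeasure on a
   compact space is its value at 1. *)

Lemma Rsup_is_lub (P : R -> Prop) :
  (exists x, P x) -> (exists B, forall x, P x -> x <= B) -> is_lub P (Rsup P).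
Proof.
  intros Hne Hbd. unfold Rsup. apply epsilon_spec.
  destruct (completeness P Hbd Hne) as [m Hm]. now exists m.
Qed.

Lemma Rinf_glb (P : R -> Prop) (m : R) :
  (exists x, P x) -> (forall x, P x -> m <= x) ->
  (forall x, P x -> Rinf P <= x) /\ (forall c, (forall x, P x -> c <= x) -> c <= Rinf P).
Proof.
  intros [x0 Hx0] Hm. unfold Rinf.
  destruct (Rsup_is_lub (fun r => P (- r))) as [Hub Hleast].
  - exists (- x0). now rewrite Ropp_involutive.
  - exists (- m). intros r Hr. specialize (Hm _ Hr). lra.
  - split.
    + intros x Hx. enough (- x <= Rsup (fun r => P (- r))) by lra.
      apply Hub. now rewrite Ropp_involutive.
    + intros c Hc. enough (Rsup (fun r => P (- r)) <= - c) by lra.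
      apply Hleast. intros r Hr. specialize (Hc _ Hr). lra.
Qed.

Lemma Rinf_eq_min (P : R -> Prop) (m : R) : P m -> (forall x, P x -> m <= x) -> Rinf P = m.
Proof.
  intros Hm Hmin. destruct (Rinf_glb P m (ex_intro _ m Hm) Hmin) as [Hlow Hgreat].
  apply Rle_antisym; auto.
Qed.

Lemma cont_const {X : Type} (d : X -> X -> R) (c : R) : cont d (fun _ => c).
Proof.
  intros x _ e He. exists 1. split; [lra|]. intros y _ _. unfold distR.
  rewrite Rminus_diag, Rabs_R0. lra.
Qed.

Lemma cont_plus {X : Type} (d : X -> X -> R) (a b : X -> R) :
  cont d a -> cont d b -> cont d (fun x => a x + b x).
Proof.
  intros ha hb x _ e He.
  destruct (ha x I (e / 2)) as [d1 [Hd1 H1]]; [lra|].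
  destruct (hb x I (e / 2)) as [d2 [Hd2 H2]]; [lra|].
  exists (Rmin d1 d2). split; [now apply Rmin_pos|]. intros y _ Hy.
  specialize (H1 y I (Rlt_le_trans _ _ _ Hy (Rmin_l d1 d2))).
  specialize (H2 y I (Rlt_le_trans _ _ _ Hy (Rmin_r d1 d2))). unfold distR in *.
  replace (a y + b y - (a x + b x)) with ((a y - a x) + (b y - b x)) by ring.
  pose proof (Rabs_triang (a y - a x) (b y - b x)). lra.
Qed.

Lemma cont_scale {X : Type} (d : X -> X -> R) (t : R) (a : X -> R) :
  cont d a -> cont d (fun x => t * a x).
Proof.
  intros ha x _ e He. pose proof (Rabs_pos t) as Ht.
  destruct (ha x I (e / (Rabs t + 1))) as [del [Hdel H]]; [apply Rdiv_lt_0_compat; lra|].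
  exists del. split; auto. intros y _ Hy. specialize (H y I Hy). unfold distR in *.
  replace (t * a y - t * a x) with (t * (a y - a x)) by ring. rewrite Rabs_mult.
  assert (e / (Rabs t + 1) * (Rabs t + 1) = e) by (field; lra).
  pose proof (Rabs_pos (a y - a x)). nra.
Qed.

Lemma dense_cont_le {Y : Type} (dY : Y -> Y -> R) (V : Y -> Prop) (a b : Y -> R) :
  dense_set dY V -> cont dY a -> cont dY b ->
  (forall z, V z -> a z <= b z) -> forall y, a y <= b y.
Proof.
  intros hV ha hb H y. apply Rnot_lt_le. intros Hlt.
  set (e := (a y - b y) / 2).
  destruct (ha y I e) as [d1 [Hd1 H1]]; [unfold e; lra|].
  destruct (hb y I e) as [d2 [Hd2 H2]]; [unfold e; lra|].
  destruct (hV y (Rmin d1 d2)) as [z [Vz dz]]; [now apply Rmin_pos|].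
  specialize (H1 z I (Rlt_le_trans _ _ _ dz (Rmin_l d1 d2))).
  specialize (H2 z I (Rlt_le_trans _ _ _ dz (Rmin_r d1 d2))). unfold distR in *.
  apply Rabs_def2 in H1. apply Rabs_def2 in H2. specialize (H z Vz). unfold e in *. lra.
Qed.

Lemma list_upper_bound (l : list R) : exists M, forall r, In r l -> r <= M.
Proof.
  induction l as [|a l [M HM]].
  - exists 0. intros r [].
  - exists (Rmax a M). intros r [<- | Hr].
    + apply Rmax_l.
    + apply Rle_trans with M; auto using Rmax_r.
Qed.

Lemma cont_bounded {X : Type} (d : X -> X -> R) (phi : X -> R) :
  compact_space d -> cont d phi -> exists M, forall x, Rabs (phi x) <= M.
Proof.
  intros hc hphi.
  destruct (hc R (fun r x => Rabs (phi x) < r)) as [l Hl].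
  - intros r x Hx. destruct (hphi x I (r - Rabs (phi x))) as [del [Hdel H]]; [lra|].
    exists del. split; auto. intros y Hy. specialize (H y I Hy). unfold distR in H.
    pose proof (Rabs_triang_inv (phi y) (phi x)). lra.
  - intros x _. exists (Rabs (phi x) + 1). lra.
  - destruct (list_upper_bound l) as [M HM]. exists M. intros x.
    destruct (Hl x I) as [r [Hr Hx]]. specialize (HM r Hr). lra.
Qed.

Lemma Linf_is_lub {X : Type} (phi : X -> R) (M : R) :
  (forall x, Rabs (phi x) <= M) ->
  is_lub (fun r => r = 0 \/ exists x, r = Rabs (phi x)) (Linf phi).
Proof.
  intros H. unfold Linf. apply Rsup_is_lub; [now exists 0; left|].
  exists (Rmax 0 M). intros r [-> | [x ->]]; [apply Rmax_l|].
  apply Rle_trans with M; auto using Rmax_r.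
Qed.

Lemma Linf_ge_abs {X : Type} (d : X -> X -> R) (phi : X -> R) :
  compact_space d -> cont d phi -> forall x, Rabs (phi x) <= Linf phi.
Proof.
  intros hc hphi x. destruct (cont_bounded d phi hc hphi) as [M HM].
  apply (Linf_is_lub phi M HM). right. now exists x.
Qed.

Lemma Linf_nonneg {X : Type} (d : X -> X -> R) (phi : X -> R) :
  compact_space d -> cont d phi -> 0 <= Linf phi.
Proof.
  intros hc hphi. destruct (cont_bounded d phi hc hphi) as [M HM].
  apply (Linf_is_lub phi M HM). now left.
Qed.

Lemma Linf_le {X : Type} (phi : X -> R) (c : R) :
  0 <= c -> (forall x, Rabs (phi x) <= c) -> Linf phi <= c.
Proof.
  intros Hc H. apply (Linf_is_lub phi c H). intros r [-> | [x ->]]; auto.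
Qed.

Lemma limsup_at_le {Y : Type} (dY : Y -> Y -> R) (V : Y -> Prop) (g Psi : Y -> R) (B : R) (y : Y) :
  is_metric dY -> dense_set dY V -> (forall z, V z -> Rabs (g z) <= B) -> cont dY Psi ->
  (forall z, V z -> g z <= Psi z) -> limsup_at dY V g y <= Psi y.
Proof.
  intros [_ [_ [hsym _]]] hV hB hPsi hle. unfold limsup_at.
  set (near := fun r t => exists z, V z /\ dY z y < r /\ t = g z).
  assert (Hnear : forall r, r > 0 -> exists z, V z /\ dY z y < r).
  { intros r Hr. destruct (hV y r Hr) as [z [Vz dz]]. exists z. now rewrite hsym. }
  assert (Hlub : forall r, r > 0 -> is_lub (near r) (Rsup (near r))).
  { intros r Hr. apply Rsup_is_lub.
    - destruct (Hnear r Hr) as [z [Vz dz]]. now exists (g z), z.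
    - exists B. intros t [z [Vz [_ ->]]]. specialize (hB z Vz).
      pose proof (Rle_abs (g z)). lra. }
  destruct (Rinf_glb (fun s => exists r, r > 0 /\ s = Rsup (near r)) (- B)) as [Hinf _].
  - exists (Rsup (near 1)), 1. split; [lra | reflexivity].
  - intros s [r [Hr ->]]. destruct (Hnear r Hr) as [z [Vz dz]].
    assert (g z <= Rsup (near r)) by (apply (Hlub r Hr); now exists z).
    specialize (hB z Vz). pose proof (Rabs_Ropp (g z)). pose proof (Rle_abs (- g z)). lra.
  - apply Rle_plus_epsilon. intros e He.
    destruct (hPsi y I e He) as [del [Hdel Hclose]].
    apply Rle_trans with (Rsup (near del)); [apply Hinf; now exists del|].
    apply (Hlub del Hdel). intros t [z [Vz [dz ->]]].
    specialize (Hclose z I ltac:(now rewrite hsym)). unfold distR in Hclose.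
    apply Rabs_def2 in Hclose. specialize (hle z Vz). lra.
Qed.

Lemma Ext_le {Y : Type} (dY : Y -> Y -> R) (V : Y -> Prop) (g Psi : Y -> R) (B : R) :
  is_metric dY -> dense_set dY V -> (forall z, V z -> Rabs (g z) <= B) -> cont dY Psi ->
  (forall z, V z -> g z <= Psi z) -> forall y, Ext dY V g y <= Psi y.
Proof.
  intros hY hV hB hPsi hle y. unfold Ext.
  destruct (excluded_middle_informative (V y)); eauto using limsup_at_le.
Qed.

Lemma fiber_list_length {X Y : Type} (U : X -> Prop) (f : X -> Y) (y : Y) (l : list X) :
  NoDup l -> (forall x, In x l <-> U x /\ f x = y) -> length (fiber_list U f y) = length l.
Proof.
  intros Hnd Hmem. unfold fiber_list.
  destruct (epsilon_spec (inhabits nil)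
              (fun l => NoDup l /\ forall x, In x l <-> U x /\ f x = y)
              (ex_intro _ l (conj Hnd Hmem))) as [Hnd' Hmem'].
  apply Permutation_length, NoDup_Permutation; auto.
  intros x. now rewrite Hmem, Hmem'.
Qed.

Lemma covering_fiber {X Y : Type} (dX : X -> X -> R) (dY : Y -> Y -> R)
  (U : X -> Prop) (f : X -> Y) (deg : nat) (y : Y) :
  proper_covering dX dY U f deg -> image U f y ->
  exists l, NoDup l /\ (forall x, In x l <-> U x /\ f x = y) /\ length l = deg.
Proof.
  intros [_ [_ Hloc]] Hy.
  destruct (Hloc y Hy) as [W [_ [Wy [_ [S [Hsheet [Hdisj Hcover]]]]]]].
  destruct Hy as [x0 _].
  (* the point of the fibre in the sheet [S i]; the premise [i < deg] makes the choice total *)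
  set (p := fun i => epsilon (inhabits x0) (fun x => (i < deg)%nat -> S i x /\ f x = y)).
  assert (Hp : forall i, (i < deg)%nat -> S i (p i) /\ f (p i) = y).
  { intros i Hi.
    apply (epsilon_spec (inhabits x0) (fun x => (i < deg)%nat -> S i x /\ f x = y)); [|exact Hi].
    destruct (Hsheet i Hi) as [_ [_ [g [_ [Hg _]]]]]. exists (g y). auto. }
  exists (map p (seq 0 deg)). split; [|split].
  - apply NoDup_map_NoDup_ForallPairs; [|apply seq_NoDup].
    intros i j Hi Hj Hij. apply in_seq in Hi, Hj.
    destruct (Hp i ltac:(lia)) as [Si _]. destruct (Hp j ltac:(lia)) as [Sj _].
    rewrite Hij in Si. apply (Hdisj i j (p j)); auto; lia.
  - intros x. rewrite in_map_iff. split.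
    + intros [i [<- Hi]]. apply in_seq in Hi. destruct (Hp i ltac:(lia)) as [Si fi].
      destruct (Hsheet i ltac:(lia)) as [_ [HSU _]]. split; auto. apply (HSU _ Si).
    + intros [Ux fx]. destruct (Hcover x Ux ltac:(now rewrite fx)) as [i [Hi Si]].
      exists i. split; [|apply in_seq; lia].
      destruct (Hsheet i Hi) as [_ [_ [g [_ [_ Hgf]]]]]. destruct (Hp i Hi) as [Spi fpi].
      now rewrite <- (Hgf _ Spi), <- (Hgf _ Si), fx, fpi.
  - now rewrite length_map, length_seq.
Qed.

Lemma fiber_length {X Y : Type} (dX : X -> X -> R) (dY : Y -> Y -> R)
  (U : X -> Prop) (f : X -> Y) (deg : nat) :
  proper_covering dX dY U f deg ->
  forall y, image U f y -> length (fiber_list U f y) = deg.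
Proof.
  intros hcov y Hy. destruct (covering_fiber dX dY U f deg y hcov Hy) as [l [Hnd [Hmem Hl]]].
  rewrite <- Hl. exact (fiber_list_length U f y l Hnd Hmem).
Qed.

Lemma pushU_plus {X Y : Type} (U : X -> Prop) (f : X -> Y) (phi psi : X -> R) (y : Y) :
  pushU U f (fun x => phi x + psi x) y = pushU U f phi y + pushU U f psi y.
Proof. unfold pushU. induction (fiber_list U f y); simpl; lra. Qed.

Lemma pushU_scale {X Y : Type} (U : X -> Prop) (f : X -> Y) (t : R) (phi : X -> R) (y : Y) :
  pushU U f (fun x => t * phi x) y = t * pushU U f phi y.
Proof.
  unfold pushU. induction (fiber_list U f y) as [|x l IH]; simpl; [ring|].
  rewrite IH. ring.
Qed.

Lemma pushU_mono {X Y : Type} (U : X -> Prop) (f : X -> Y) (phi psi : X -> R) (y : Y) :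
  (forall x, phi x <= psi x) -> pushU U f phi y <= pushU U f psi y.
Proof.
  intros H. unfold pushU. induction (fiber_list U f y) as [|x l IH]; simpl; [lra|].
  specialize (H x). lra.
Qed.

Section PositiveSubmeasure.

Context {Z : Type} {d : Z -> Z -> R} {mu : (Z -> R) -> R}.
Hypothesis mu_subadd : forall phi psi, cont d phi -> cont d psi ->
  mu (fun x => phi x + psi x) <= mu phi + mu psi.
Hypothesis mu_hom : forall t phi, 0 <= t -> cont d phi -> mu (fun x => t * phi x) = t * mu phi.
Hypothesis mu_pos : positive_sm d mu.

Lemma mu_const_scale (t c : R) : 0 <= t -> mu (fun _ => t * c) = t * mu (fun _ => c).
Proof. intros Ht. exact (mu_hom t (fun _ => c) Ht (cont_const d c)). Qed.

Lemma mu_one_nonneg : 0 <= mu (fun _ => 1).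
Proof.
  pose proof (mu_const_scale 0 1 (Rle_refl 0)) as H0. rewrite (Rmult_0_l (mu _)) in H0.
  rewrite <- H0. apply mu_pos; auto using cont_const. intros; lra.
Qed.

Lemma mu_abs_le_Linf :
  compact_space d -> forall phi, cont d phi -> Rabs (mu phi) <= mu (fun _ => 1) * Linf phi.
Proof.
  intros hc phi hphi.
  pose proof (Linf_ge_abs d phi hc hphi) as Hb. pose proof (Linf_nonneg d phi hc hphi) as HL.
  set (L := Linf phi) in *.
  assert (Hup : mu phi <= L * mu (fun _ => 1)).
  { rewrite <- mu_const_scale by exact HL. apply mu_pos; auto using cont_const.
    intros x. specialize (Hb x). pose proof (Rle_abs (phi x)). lra. }
  assert (Hlow : L * mu (fun _ => -1) <= mu phi).
  { rewrite <- mu_const_scale by exact HL. apply mu_pos; auto using cont_const.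
    intros x. specialize (Hb x).
    pose proof (Rabs_Ropp (phi x)). pose proof (Rle_abs (- phi x)). lra. }
  assert (Hopp : - mu (fun _ => 1) <= mu (fun _ => -1)).
  { pose proof (mu_const_scale 0 1 (Rle_refl 0)) as H0. rewrite (Rmult_0_l (mu _)) in H0.
    assert (mu (fun _ => 0 * 1) <= mu (fun _ => 1 + -1)).
    { apply mu_pos; auto using cont_const. intros; lra. }
    pose proof (mu_subadd _ _ (cont_const d 1) (cont_const d (-1))). lra. }
  apply Rabs_le. split; nra.
Qed.

Lemma smnorm_eq : compact_space d -> smnorm d mu = mu (fun _ => 1).
Proof.
  intros hc. apply Rinf_eq_min.
  - split; [exact mu_one_nonneg | exact (mu_abs_le_Linf hc)].
  - intros C [HC Hbound]. specialize (Hbound (fun _ => 1) (cont_const d 1)).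
    assert (Linf (fun _ : Z => 1) <= 1) by (apply Linf_le; [lra | intros; rewrite Rabs_R1; lra]).
    pose proof (Linf_nonneg d (fun _ => 1) hc (cont_const d 1)).
    pose proof (Rle_abs (mu (fun _ => 1))). nra.
Qed.

End PositiveSubmeasure.

Section Pullback.

Context {X Y : Type} {dX : X -> X -> R} {dY : Y -> Y -> R} {U : X -> Prop} {f : X -> Y} {deg : nat}.
Hypothesis hY : is_metric dY.
Hypothesis cX : compact_space dX.
Hypothesis hV_dense : dense_set dY (image U f).
Hypothesis fiber_deg : forall y, image U f y -> length (fiber_list U f y) = deg.

Lemma pushU_const (c : R) (y : Y) : image U f y -> pushU U f (fun _ => c) y = INR deg * c.
Proof.
  intros Hy. unfold pushU. rewrite <- (fiber_deg y Hy).
  induction (fiber_list U f y); simpl length; rewrite ?S_INR; simpl; lra.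
Qed.

Lemma pushU_abs_le (phi : X -> R) (y : Y) :
  cont dX phi -> image U f y -> Rabs (pushU U f phi y) <= INR deg * Linf phi.
Proof.
  intros hphi Hy. unfold pushU. rewrite <- (fiber_deg y Hy).
  pose proof (Linf_ge_abs dX phi cX hphi) as Hb.
  induction (fiber_list U f y) as [|x l IH]; simpl length; rewrite ?S_INR; simpl.
  - rewrite Rabs_R0. lra.
  - pose proof (Rabs_triang (phi x) (fold_right Rplus 0 (map phi l))). specialize (Hb x). lra.
Qed.

Definition dominates (phi : X -> R) (psi : Y -> R) : Prop :=
  cont dY psi /\ forall y, image U f y -> pushU U f phi y <= psi y.

Lemma dominates_iff_push_le (phi : X -> R) (psi : Y -> R) : cont dX phi ->
  dominates phi psi <-> cont dY psi /\ forall y, push dY U f phi y <= psi y.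
Proof.
  intros hphi. unfold dominates. split; intros [hpsi H]; split; auto.
  - apply Ext_le with (B := INR deg * Linf phi); auto.
    intros z Hz. now apply pushU_abs_le.
  - intros y Hy. specialize (H y). unfold push, Ext in H.
    now destruct (excluded_middle_informative (image U f y)).
Qed.

Lemma dominates_Linf (phi : X -> R) : cont dX phi -> dominates phi (fun _ => INR deg * Linf phi).
Proof.
  intros hphi. split; [apply cont_const|]. intros y Hy.
  pose proof (pushU_abs_le phi y hphi Hy). pose proof (Rle_abs (pushU U f phi y)). lra.
Qed.

Lemma dominates_ge (phi : X -> R) (psi : Y -> R) :
  cont dX phi -> dominates phi psi -> forall y, - (INR deg * Linf phi) <= psi y.
Proof.
  intros hphi [hpsi H]. apply (dense_cont_le dY (image U f)); auto using cont_const.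
  intros z Hz. specialize (H z Hz). pose proof (pushU_abs_le phi z hphi Hz).
  pose proof (Rabs_Ropp (pushU U f phi z)). pose proof (Rle_abs (- pushU U f phi z)). lra.
Qed.

Lemma dominates_plus (phi1 phi2 : X -> R) (psi1 psi2 : Y -> R) :
  dominates phi1 psi1 -> dominates phi2 psi2 ->
  dominates (fun x => phi1 x + phi2 x) (fun y => psi1 y + psi2 y).
Proof.
  intros [h1 H1] [h2 H2]. split; [now apply cont_plus|].
  intros y Hy. rewrite pushU_plus. specialize (H1 y Hy). specialize (H2 y Hy). lra.
Qed.

Lemma dominates_scale (t : R) (phi : X -> R) (psi : Y -> R) :
  0 <= t -> dominates phi psi -> dominates (fun x => t * phi x) (fun y => t * psi y).
Proof.
  intros Ht [hpsi H]. split; [now apply cont_scale|].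
  intros y Hy. rewrite pushU_scale. apply Rmult_le_compat_l; auto.
Qed.

Lemma dominates_antimono (phi1 phi2 : X -> R) (psi : Y -> R) :
  (forall x, phi1 x <= phi2 x) -> dominates phi2 psi -> dominates phi1 psi.
Proof.
  intros Hle [hpsi H]. split; auto. intros y Hy.
  apply Rle_trans with (pushU U f phi2 y); auto using pushU_mono.
Qed.

Lemma dominates_const (c : R) (psi : Y -> R) :
  cont dY psi -> dominates (fun _ => c) psi <-> forall y, INR deg * c <= psi y.
Proof.
  intros hpsi. unfold dominates. split.
  - intros [_ H]. apply (dense_cont_le dY (image U f)); auto using cont_const.
    intros z Hz. rewrite <- (pushU_const c z Hz). auto.
  - intros H. split; auto. intros y Hy. now rewrite pushU_const.
Qed.

Context {nu : (Y -> R) -> R}.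
Hypothesis nu_pos : positive_sm dY nu.

Lemma pull_glb (phi : X -> R) : cont dX phi ->
  (forall psi, dominates phi psi -> pull dY U f nu phi <= nu psi) /\
  (forall c, (forall psi, dominates phi psi -> c <= nu psi) -> c <= pull dY U f nu phi).
Proof.
  intros hphi. set (D := INR deg * Linf phi).
  destruct (Rinf_glb (fun s => exists psi, cont dY psi /\
              (forall y, push dY U f phi y <= psi y) /\ s = nu psi) (nu (fun _ => - D)))
    as [Hlow Hgreat].
  - pose proof (dominates_Linf phi hphi) as Hdom. exists (nu (fun _ => D)), (fun _ => D).
    apply (dominates_iff_push_le phi _ hphi) in Hdom as [hD HD]; auto.
  - intros s [psi [hpsi [Hle ->]]].
    apply nu_pos; auto using cont_const. apply (dominates_ge phi); auto.
    now apply dominates_iff_push_le.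
  - split.
    + intros psi Hd. apply Hlow. exists psi.
      apply (dominates_iff_push_le phi psi hphi) in Hd as [hpsi Hle]. auto.
    + intros c Hc. apply Hgreat. intros s [psi [hpsi [Hle ->]]].
      apply Hc. now apply dominates_iff_push_le.
Qed.

Lemma pull_le (phi : X -> R) (psi : Y -> R) :
  cont dX phi -> dominates phi psi -> pull dY U f nu phi <= nu psi.
Proof. intros hphi. exact (proj1 (pull_glb phi hphi) psi). Qed.

Lemma pull_ge (phi : X -> R) (c : R) :
  cont dX phi -> (forall psi, dominates phi psi -> c <= nu psi) -> c <= pull dY U f nu phi.
Proof. intros hphi. exact (proj2 (pull_glb phi hphi) c). Qed.

Lemma pull_mono : forall phi1 phi2, cont dX phi1 -> cont dX phi2 ->
  (forall x, phi1 x <= phi2 x) -> pull dY U f nu phi1 <= pull dY U f nu phi2.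
Proof.
  intros phi1 phi2 h1 h2 Hle. apply pull_ge; auto.
  intros psi Hd. apply pull_le; auto. now apply (dominates_antimono phi1 phi2).
Qed.

Lemma pull_const (c : R) : pull dY U f nu (fun _ => c) = nu (fun _ => INR deg * c).
Proof.
  apply Rle_antisym.
  - apply pull_le; [apply cont_const|].
    apply dominates_const; [apply cont_const | intros; lra].
  - apply pull_ge; [apply cont_const|]. intros psi Hd.
    pose proof (proj1 Hd) as hpsi. apply nu_pos; auto using cont_const.
    now apply (dominates_const c psi hpsi).
Qed.

Hypothesis nu_subadd : forall psi1 psi2, cont dY psi1 -> cont dY psi2 ->
  nu (fun y => psi1 y + psi2 y) <= nu psi1 + nu psi2.

Lemma pull_subadd : forall phi1 phi2, cont dX phi1 -> cont dX phi2 ->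
  pull dY U f nu (fun x => phi1 x + phi2 x) <= pull dY U f nu phi1 + pull dY U f nu phi2.
Proof.
  intros phi1 phi2 h1 h2. pose proof (cont_plus dX phi1 phi2 h1 h2) as h12.
  enough (pull dY U f nu (fun x => phi1 x + phi2 x) - pull dY U f nu phi2
          <= pull dY U f nu phi1) by lra.
  apply pull_ge; auto. intros psi1 Hd1.
  enough (pull dY U f nu (fun x => phi1 x + phi2 x) - nu psi1 <= pull dY U f nu phi2) by lra.
  apply pull_ge; auto. intros psi2 Hd2.
  pose proof (pull_le _ _ h12 (dominates_plus phi1 phi2 psi1 psi2 Hd1 Hd2)).
  pose proof (nu_subadd psi1 psi2 (proj1 Hd1) (proj1 Hd2)). lra.
Qed.

Hypothesis nu_hom : forall t psi, 0 <= t -> cont dY psi -> nu (fun y => t * psi y) = t * nu psi.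

Lemma pull_scale_le (t : R) (phi : X -> R) : 0 < t -> cont dX phi ->
  pull dY U f nu (fun x => t * phi x) <= t * pull dY U f nu phi.
Proof.
  intros Ht hphi. pose proof (cont_scale dX t phi hphi) as htphi.
  apply Rmult_le_reg_l with (/ t); [now apply Rinv_0_lt_compat|].
  rewrite <- Rmult_assoc, Rinv_l, Rmult_1_l by lra.
  apply pull_ge; auto. intros psi Hd.
  pose proof (pull_le _ _ htphi (dominates_scale t phi psi (Rlt_le _ _ Ht) Hd)) as Hle.
  rewrite nu_hom in Hle by (lra || exact (proj1 Hd)).
  apply Rmult_le_reg_l with t; auto.
  rewrite <- Rmult_assoc, Rinv_r, Rmult_1_l by lra. exact Hle.
Qed.

Lemma pull_homogeneous : forall t phi, 0 <= t -> cont dX phi ->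
  pull dY U f nu (fun x => t * phi x) = t * pull dY U f nu phi.
Proof.
  intros t phi Ht hphi. pose proof (cont_scale dX t phi hphi) as htphi.
  destruct (Rle_lt_or_eq_dec 0 t Ht) as [Hpos | <-].
  - apply Rle_antisym; [now apply pull_scale_le|].
    assert (Hback : pull dY U f nu phi <= / t * pull dY U f nu (fun x => t * phi x)).
    { apply Rle_trans with (pull dY U f nu (fun x => / t * (t * phi x))).
      - apply pull_mono; auto using cont_scale. intros x. right. field. lra.
      - apply pull_scale_le; auto. now apply Rinv_0_lt_compat. }
    apply Rmult_le_compat_l with (r := t) in Hback; [|lra].
    rewrite <- Rmult_assoc, Rinv_r, Rmult_1_l in Hback by lra. exact Hback.
  - rewrite (Rmult_0_l (pull dY U f nu phi)).
    transitivity (pull dY U f nu (fun _ => 0)).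
    { apply Rle_antisym; apply pull_mono; auto using cont_const; intros; lra. }
    rewrite pull_const.
    assert (nu (fun _ => INR deg * 0) = nu (fun _ => 0 * 0)) as ->.
    { apply Rle_antisym; apply nu_pos; auto using cont_const; intros; lra. }
    rewrite (mu_const_scale nu_hom 0 0 (Rle_refl 0)). ring.
Qed.

End Pullback.

Theorem theorem2p12 (X Y : Type) (dX : X -> X -> R) (dY : Y -> Y -> R)
  (hX : is_metric dX) (hY : is_metric dY)
  (cX : compact_space dX) (cY : compact_space dY)
  (dom : X -> Prop) (f : X -> Y)
  (hdom_open : mopen dX dom) (hdom_dense : dense_set dX dom)
  (hf : continuous_on dX dY dom f)
  (U : X -> Prop) (deg : nat)
  (hU_open : mopen dX U) (hU_dense : dense_set dX U) (hU_dom : forall x, U x -> dom x)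
  (hV_open : mopen dY (image U f)) (hV_dense : dense_set dY (image U f))
  (hcov : proper_covering dX dY U f deg) :
  (forall nu, SMplus dY nu -> SMplus dX (pull dY U f nu)) /\
  (forall nu, SMplus dY nu ->
     pull dY U f nu (fun _ => 1) = INR deg * nu (fun _ => 1) /\
     pull dY U f nu (fun _ => -1) = INR deg * nu (fun _ => -1) /\
     smnorm dX (pull dY U f nu) = INR deg * smnorm dY nu).
Proof.
  pose proof (fiber_length dX dY U f deg hcov) as fiber_deg.
  assert (pull_SMplus : forall nu, SMplus dY nu -> SMplus dX (pull dY U f nu)).
  { intros nu [[nu_subadd [nu_hom _]] nu_pos].
    pose proof (pull_subadd hY cX hV_dense fiber_deg nu_pos nu_subadd) as subadd.
    pose proof (pull_homogeneous hY cX hV_dense fiber_deg nu_pos nu_hom) as hom.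
    pose proof (pull_mono hY cX hV_dense fiber_deg nu_pos) as mono.
    split; [split; [exact subadd | split; [exact hom|]] | exact mono].
    exists (pull dY U f nu (fun _ => 1)). exact (mu_abs_le_Linf subadd hom mono cX). }
  split; [exact pull_SMplus|]. intros nu hnu.
  pose proof hnu as [[nu_subadd [nu_hom _]] nu_pos].
  assert (pull_const_eq : forall c, pull dY U f nu (fun _ => c) = INR deg * nu (fun _ => c)).
  { intros c. rewrite (pull_const hY cX hV_dense fiber_deg nu_pos).
    exact (mu_const_scale nu_hom (INR deg) c (pos_INR deg)). }
  destruct (pull_SMplus nu hnu) as [[pull_nu_subadd [pull_nu_hom _]] pull_nu_pos].
  split; [|split]; auto.
  rewrite (smnorm_eq pull_nu_subadd pull_nu_hom pull_nu_pos cX),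
          (smnorm_eq nu_subadd nu_hom nu_pos cY).
  apply pull_const_eq.
Qed.
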